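(* Let $(\mathcal{C},\wedge,S)$ be a braided monoidal category with braiding $\beta$, and let $T$ be an object of $\mathcal{C}$. Assume that $T$ is symmetric and dualizable. Then $T$ has $t$-twisted trivial braiding, where $t = \mathrm{id}_T \wedge (\varepsilon \beta_{T,T^\vee}^{-1} \eta)$ is multiplication by the Euler characteristic of $T$.
   Context: Here $T$ is called symmetric if $(\mathrm{id}_T \wedge \beta_{T,T}^{-1})(\beta_{T,T} \wedge \mathrm{id}_T) = \mathrm{id}_{T\wedge T\wedge T}$. $T$ is dualizable with dual $T^\vee$, meaning there are morphisms $\eta: S \to T^\vee \wedge T$ (unit) and $\varepsilon: T \wedge T^\vee \to S$ (counit) satisfying the triangle equations $(\varepsilon \wedge \mathrm{id}_T)(\mathrm{id}_T \wedge \eta) = \mathrm{id}_T$ and $(\mathrm{id}_{T^\vee} \wedge \varepsilon)(\eta \wedge \mathrm{id}_{T^\vee}) = \mathrm{id}_{T^\vee}$. For an endomorphism $t: T \to T$, $T$ is said to have $t$-twisted trivial braiding if $\beta_{T,T} = \mathrm{id}_T \wedge t$ (equivalently $\beta_{T,T} = t \wedge \mathrm{id}_T$). Monoidal structure is taken to be strict. The composite $\varepsilon \beta_{T,T^\vee}^{-1} \eta : S \to S$ is the Euler characteristic of $T$. *)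

(* The monoidal structure is given with explicit associator and
   unitors (strictness is the usual WLOG convention; a strict
   category is the special case where these are identities). *)

Set Implicit Arguments.
Unset Strict Implicit.

Record BraidedMonoidalCategory := {
  Ob : Type;
  Hom : Ob -> Ob -> Type;
  comp : forall A B C : Ob, Hom B C -> Hom A B -> Hom A C;
  idm : forall A : Ob, Hom A A;
  comp_assoc : forall A B C D (f : Hom A B) (g : Hom B C) (h : Hom C D),
      comp h (comp g f) = comp (comp h g) f;
  comp_id_l : forall A B (f : Hom A B), comp (idm B) f = f;
  comp_id_r : forall A B (f : Hom A B), comp f (idm A) = f;

  tens : Ob -> Ob -> Ob;
  tensH : forall A B C D : Ob, Hom A B -> Hom C D -> Hom (tens A C) (tens B D);
  tens_id : forall A B, tensH (idm A) (idm B) = idm (tens A B);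
  tens_comp : forall A B C A' B' C' (f : Hom A B) (g : Hom B C)
      (f' : Hom A' B') (g' : Hom B' C'),
      tensH (comp g f) (comp g' f') = comp (tensH g g') (tensH f f');
  unitO : Ob;

  assoc : forall A B C, Hom (tens (tens A B) C) (tens A (tens B C));
  assoc_inv : forall A B C, Hom (tens A (tens B C)) (tens (tens A B) C);
  assoc_inv_l : forall A B C, comp (assoc_inv A B C) (assoc A B C) = idm _;
  assoc_inv_r : forall A B C, comp (assoc A B C) (assoc_inv A B C) = idm _;
  assoc_nat : forall A A' B B' C C' (f : Hom A A') (g : Hom B B') (h : Hom C C'),
      comp (assoc A' B' C') (tensH (tensH f g) h)
      = comp (tensH f (tensH g h)) (assoc A B C);

  lunit : forall A, Hom (tens unitO A) A;
  lunit_inv : forall A, Hom A (tens unitO A);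
  lunit_inv_l : forall A, comp (lunit_inv A) (lunit A) = idm _;
  lunit_inv_r : forall A, comp (lunit A) (lunit_inv A) = idm _;
  lunit_nat : forall A B (f : Hom A B),
      comp (lunit B) (tensH (idm unitO) f) = comp f (lunit A);

  runit : forall A, Hom (tens A unitO) A;
  runit_inv : forall A, Hom A (tens A unitO);
  runit_inv_l : forall A, comp (runit_inv A) (runit A) = idm _;
  runit_inv_r : forall A, comp (runit A) (runit_inv A) = idm _;
  runit_nat : forall A B (f : Hom A B),
      comp (runit B) (tensH f (idm unitO)) = comp f (runit A);

  pentagon : forall A B C D,
      comp (assoc A B (tens C D)) (assoc (tens A B) C D)
      = comp (tensH (idm A) (assoc B C D))
             (comp (assoc A (tens B C) D) (tensH (assoc A B C) (idm D)));
  triangle : forall A B,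
      comp (tensH (idm A) (lunit B)) (assoc A unitO B) = tensH (runit A) (idm B);

  braid : forall A B, Hom (tens A B) (tens B A);
  braid_inv : forall A B, Hom (tens B A) (tens A B);
  braid_inv_l : forall A B, comp (braid_inv A B) (braid A B) = idm _;
  braid_inv_r : forall A B, comp (braid A B) (braid_inv A B) = idm _;
  braid_nat : forall A A' B B' (f : Hom A A') (g : Hom B B'),
      comp (braid A' B') (tensH f g) = comp (tensH g f) (braid A B);
  hexagon1 : forall A B C,
      comp (assoc B C A) (comp (braid A (tens B C)) (assoc A B C))
      = comp (tensH (idm B) (braid A C))
             (comp (assoc B A C) (tensH (braid A B) (idm C)));
  hexagon2 : forall A B C,
      comp (assoc_inv C A B) (comp (braid (tens A B) C) (assoc_inv A B C))
      = comp (tensH (braid A C) (idm B))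
             (comp (assoc_inv A C B) (tensH (idm A) (braid B C)))
}.

Arguments Hom {_} _ _.
Arguments comp {_ A B C} _ _.
Arguments idm {_} A.
Arguments tens {_} _ _.
Arguments tensH {_ A B C D} _ _.
Arguments unitO {_}.
Arguments assoc {_} A B C.
Arguments assoc_inv {_} A B C.
Arguments lunit {_} A.
Arguments lunit_inv {_} A.
Arguments runit {_} A.
Arguments runit_inv {_} A.
Arguments braid {_} A B.
Arguments braid_inv {_} A B.

(* T is symmetric: (id_T ∧ β_{T,T}^{-1}) (β_{T,T} ∧ id_T) = id_{T∧T∧T},
   written with the associator made explicit. *)
Definition symmetric_obj (C : BraidedMonoidalCategory) (T : Ob C) : Prop :=
  comp (tensH (idm T) (braid_inv T T)) (comp (assoc T T T) (tensH (braid T T) (idm T)))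
  = assoc T T T.

Definition is_dual (C : BraidedMonoidalCategory) (T Tv : Ob C)
    (eta : Hom unitO (tens Tv T)) (eps : Hom (tens T Tv) unitO) : Prop :=
  comp (lunit T) (comp (tensH eps (idm T))
     (comp (assoc_inv T Tv T) (comp (tensH (idm T) eta) (runit_inv T)))) = idm T
  /\
  comp (runit Tv) (comp (tensH (idm Tv) eps)
     (comp (assoc Tv T Tv) (comp (tensH eta (idm Tv)) (lunit_inv Tv)))) = idm Tv.

Definition euler_char (C : BraidedMonoidalCategory) (T Tv : Ob C)
    (eta : Hom unitO (tens Tv T)) (eps : Hom (tens T Tv) unitO) : Hom unitO unitO :=
  comp eps (comp (braid_inv T Tv) eta).

Definition euler_twist (C : BraidedMonoidalCategory) (T Tv : Ob C)
    (eta : Hom unitO (tens Tv T)) (eps : Hom (tens T Tv) unitO) : Hom T T :=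
  comp (runit T) (comp (tensH (idm T) (euler_char eta eps)) (runit_inv T)).

Definition twisted_trivial_braiding (C : BraidedMonoidalCategory) (T : Ob C)
    (t : Hom T T) : Prop :=
  braid T T = tensH (idm T) t.

Arguments symmetric_obj {C} T.
Arguments is_dual {C T Tv} eta eps.
Arguments euler_char {C T Tv} eta eps.
Arguments euler_twist {C T Tv} eta eps.
Arguments twisted_trivial_braiding {C} T t.

(* Use the partial trace over the last factor T built from the coevaluation
   [β_{T,T^∨}^{-1} η : S -> T ∧ T^∨] and [ε].  It sends [f ∧ 1_T] to [f]
   times the Euler characteristic χ, commutes with [1_A ∧ -], and sends
   [β_{T,T}^{-1}] to [1_T] (yanking: hexagon plus the first triangle
   equation).  Symmetry of T says [β_{T,T}^{-1} ∧ 1_T = 1_T ∧ β_{T,T}^{-1}],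
   so tracing both sides gives [β_{T,T}^{-1} (1_{T∧T} ∧ χ) = 1_{T∧T}],
   i.e. [β_{T,T} = 1_T ∧ t]. *)

From Stdlib Require Import Setoid.

Section MonoidalFacts.
Context {C : BraidedMonoidalCategory}.
Notation S := (@unitO C).
Notation "g ∘ f" := (comp g f) (at level 40, left associativity).
Notation "f ⊗ g" := (tensH f g) (at level 35).
Notation "1_ A" := (idm A) (at level 9).

Lemma tensH_comp_idr {A B X Y : Ob C} (f : Hom A B) (g : Hom B X) :
  (g ∘ f) ⊗ 1_ Y = (g ⊗ 1_ Y) ∘ (f ⊗ 1_ Y).
Proof. rewrite <- tens_comp, comp_id_l. reflexivity. Qed.

Lemma tensH_comp_idl {A B X Y : Ob C} (f : Hom A B) (g : Hom B X) :
  1_ Y ⊗ (g ∘ f) = (1_ Y ⊗ g) ∘ (1_ Y ⊗ f).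
Proof. rewrite <- tens_comp, comp_id_l. reflexivity. Qed.

Lemma tensH_split {A B X Y : Ob C} (f : Hom A B) (g : Hom X Y) :
  f ⊗ g = (f ⊗ 1_ Y) ∘ (1_ A ⊗ g).
Proof. rewrite <- tens_comp, comp_id_l, comp_id_r. reflexivity. Qed.

Lemma tensH_idr_iso {A B : Ob C} (X : Ob C) (f : Hom A B) (g : Hom B A) :
  f ∘ g = 1_ B -> (f ⊗ 1_ X) ∘ (g ⊗ 1_ X) = 1_ (tens B X).
Proof. intro e. rewrite <- tensH_comp_idr, e, tens_id. reflexivity. Qed.

Lemma tensH_idl_iso {A B : Ob C} (X : Ob C) (f : Hom A B) (g : Hom B A) :
  f ∘ g = 1_ B -> (1_ X ⊗ f) ∘ (1_ X ⊗ g) = 1_ (tens X B).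
Proof. intro e. rewrite <- tensH_comp_idl, e, tens_id. reflexivity. Qed.

Lemma compK {A B Z : Ob C} (x : Hom B A) (y : Hom A B) (r : Hom Z A) :
  x ∘ y = 1_ A -> x ∘ (y ∘ r) = r.
Proof. intro e. rewrite comp_assoc, e, comp_id_l. reflexivity. Qed.

Lemma split_mono_inj {A B Z : Ob C} {m : Hom A B} {mi : Hom B A} (f g : Hom Z A) :
  mi ∘ m = 1_ A -> m ∘ f = m ∘ g -> f = g.
Proof.
  intros e E. rewrite <- (comp_id_l f), <- (comp_id_l g), <- e, <- ?comp_assoc, E.
  reflexivity.
Qed.

Lemma split_epi_inj {A B Z : Ob C} {m : Hom A B} {mi : Hom B A} (f g : Hom B Z) :
  m ∘ mi = 1_ B -> f ∘ m = g ∘ m -> f = g.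
Proof.
  intros e E. rewrite <- (comp_id_r f), <- (comp_id_r g), <- e, !comp_assoc, E.
  reflexivity.
Qed.

Lemma inv_unique {X Y : Ob C} (L R : Hom X Y) (L' R' : Hom Y X) :
  L' ∘ L = 1_ X -> R ∘ R' = 1_ Y -> L = R -> R' = L'.
Proof.
  intros HL HR E.
  rewrite <- (comp_id_l R'), <- HL, <- comp_assoc, E, HR, comp_id_r. reflexivity.
Qed.

Lemma tensH_unitr_inj {A B : Ob C} (f g : Hom A B) : f ⊗ 1_ S = g ⊗ 1_ S -> f = g.
Proof.
  intro E.
  assert (conj : forall h : Hom A B, h = runit B ∘ (h ⊗ 1_ S) ∘ runit_inv A).
  { intro h. rewrite runit_nat, <- comp_assoc, runit_inv_r, comp_id_r. reflexivity. }
  rewrite (conj f), (conj g), E. reflexivity.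
Qed.

Lemma tensH_unitl_inj {A B : Ob C} (f g : Hom A B) : 1_ S ⊗ f = 1_ S ⊗ g -> f = g.
Proof.
  intro E.
  assert (conj : forall h : Hom A B, h = lunit B ∘ (1_ S ⊗ h) ∘ lunit_inv A).
  { intro h. rewrite lunit_nat, <- comp_assoc, lunit_inv_r, comp_id_r. reflexivity. }
  rewrite (conj f), (conj g), E. reflexivity.
Qed.

Lemma pentagon_inv (A Y X W : Ob C) :
  assoc A (tens Y X) W ∘ (assoc A Y X ⊗ 1_ W)
  = (1_ A ⊗ assoc_inv Y X W) ∘ (assoc A Y (tens X W) ∘ assoc (tens A Y) X W).
Proof.
  rewrite pentagon, <- ?comp_assoc, (compK _ _ _ (tensH_idl_iso _ _ _ (assoc_inv_l _ _ _))).
  reflexivity.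
Qed.

Lemma runit_tens (A Y : Ob C) : runit (tens A Y) = (1_ A ⊗ runit Y) ∘ assoc A Y S.
Proof.
  apply tensH_unitr_inj, (split_mono_inj _ _ (assoc_inv_l _ _ _)).
  transitivity ((1_ A ⊗ (1_ Y ⊗ lunit S))
                ∘ (assoc A Y (tens S S) ∘ assoc (tens A Y) S S)).
  - rewrite <- triangle, <- tens_id, comp_assoc, assoc_nat, comp_assoc. reflexivity.
  - rewrite pentagon, comp_assoc, <- tensH_comp_idl, triangle, tensH_comp_idr,
      comp_assoc, <- assoc_nat, !comp_assoc.
    reflexivity.
Qed.

Lemma runit_inv_tens (A Y : Ob C) :
  assoc A Y S ∘ runit_inv (tens A Y) = 1_ A ⊗ runit_inv Y.
Proof.
  apply (split_mono_inj _ _ (tensH_idl_iso _ _ _ (runit_inv_l Y))).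
  rewrite comp_assoc, <- runit_tens, runit_inv_r, tensH_idl_iso; [reflexivity|].
  apply runit_inv_r.
Qed.

Lemma lunit_tens (X Y : Ob C) : lunit (tens X Y) ∘ assoc S X Y = lunit X ⊗ 1_ Y.
Proof.
  apply tensH_unitl_inj.
  apply (split_epi_inj (m := assoc S (tens S X) Y ∘ (assoc S S X ⊗ 1_ Y))
                       (mi := (assoc_inv S S X ⊗ 1_ Y) ∘ assoc_inv S (tens S X) Y)).
  { rewrite <- ?comp_assoc, (compK _ _ _ (tensH_idr_iso _ _ _ (assoc_inv_r _ _ _))).
    apply assoc_inv_r. }
  transitivity ((1_ S ⊗ lunit (tens X Y))
                ∘ (assoc S S (tens X Y) ∘ assoc (tens S S) X Y)).
  - rewrite pentagon, tensH_comp_idl, !comp_assoc. reflexivity.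
  - rewrite comp_assoc, triangle, <- tens_id, <- assoc_nat, <- triangle, tensH_comp_idr,
      comp_assoc, assoc_nat, !comp_assoc.
    reflexivity.
Qed.

Lemma lunit_braid (A : Ob C) : lunit A ∘ braid A S = runit A.
Proof.
  apply tensH_unitr_inj, (split_mono_inj _ _ (braid_inv_l A S)).
  transitivity (lunit (tens S A) ∘ (assoc S S A ∘ (braid A (tens S S) ∘ assoc A S S))).
  - rewrite hexagon1, comp_assoc, lunit_nat, <- comp_assoc,
      (comp_assoc (braid A S ⊗ 1_ S)), lunit_tens, tensH_comp_idr.
    reflexivity.
  - rewrite comp_assoc, lunit_tens, comp_assoc, <- braid_nat, <- comp_assoc, triangle.
    reflexivity.
Qed.

Lemma runit_braid_inv (A : Ob C) : runit A ∘ braid_inv A S = lunit A.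
Proof. rewrite <- lunit_braid, <- comp_assoc, braid_inv_r, comp_id_r. reflexivity. Qed.

Lemma braid_inv_nat {A A' B B' : Ob C} (f : Hom A A') (g : Hom B B') :
  braid_inv A' B' ∘ (g ⊗ f) = (f ⊗ g) ∘ braid_inv A B.
Proof.
  apply (split_epi_inj _ _ (braid_inv_r A B)).
  rewrite <- ?comp_assoc, <- braid_nat, (compK _ _ _ (braid_inv_l _ _)), braid_inv_l,
    comp_id_r.
  reflexivity.
Qed.

Lemma hexagon1_inv (A B X : Ob C) :
  (braid_inv A B ⊗ 1_ X) ∘ (assoc_inv B A X ∘ (1_ B ⊗ braid_inv A X))
  = assoc_inv A B X ∘ (braid_inv A (tens B X) ∘ assoc_inv B X A).
Proof.
  eapply inv_unique; [ | | exact (hexagon1 A B X)].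
  - rewrite <- ?comp_assoc, (compK _ _ _ (assoc_inv_l B X A)),
      (compK _ _ _ (braid_inv_l _ _)), assoc_inv_l.
    reflexivity.
  - rewrite <- ?comp_assoc, (compK _ _ _ (tensH_idr_iso _ _ _ (braid_inv_r A B))),
      (compK _ _ _ (assoc_inv_r _ _ _)), tensH_idl_iso; [reflexivity|].
    apply braid_inv_r.
Qed.

Lemma symmetric_obj_braid_inv {T : Ob C} : symmetric_obj T ->
  braid_inv T T ⊗ 1_ T = assoc_inv T T T ∘ ((1_ T ⊗ braid_inv T T) ∘ assoc T T T).
Proof.
  unfold symmetric_obj. intro Hsym.
  apply (split_mono_inj _ _ (assoc_inv_l T T T)).
  rewrite (compK _ _ _ (assoc_inv_r _ _ _)).
  rewrite <- Hsym at 1.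
  rewrite <- ?comp_assoc, (tensH_idr_iso _ _ _ (braid_inv_r T T)), comp_id_r.
  reflexivity.
Qed.

Section PartialTrace.
Context {T Tv : Ob C} {eta : Hom S (tens Tv T)} {eps : Hom (tens T Tv) S}.

Definition coev : Hom S (tens T Tv) := braid_inv T Tv ∘ eta.

Definition ptrace_out (X : Ob C) : Hom (tens (tens X T) Tv) X :=
  runit X ∘ ((1_ X ⊗ eps) ∘ assoc X T Tv).

Definition ptrace_in (X : Ob C) : Hom X (tens (tens X T) Tv) :=
  assoc_inv X T Tv ∘ ((1_ X ⊗ coev) ∘ runit_inv X).

Definition ptrace (X : Ob C) (g : Hom (tens X T) (tens X T)) : Hom X X :=
  ptrace_out X ∘ ((g ⊗ 1_ Tv) ∘ ptrace_in X).

Definition euler_mul (X : Ob C) : Hom X X :=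
  runit X ∘ ((1_ X ⊗ (eps ∘ coev)) ∘ runit_inv X).

Lemma ptrace_tensH_id (X : Ob C) (f : Hom X X) : ptrace X (f ⊗ 1_ T) = f ∘ euler_mul X.
Proof.
  unfold ptrace, ptrace_out, ptrace_in, euler_mul.
  rewrite <- ?comp_assoc, (comp_assoc _ _ (assoc X T Tv)), assoc_nat, tens_id,
    <- ?comp_assoc, (compK _ _ _ (assoc_inv_r _ _ _)), (comp_assoc _ (f ⊗ _)),
    <- tens_comp, comp_id_l, comp_id_r, (tensH_split f eps), <- ?comp_assoc,
    (comp_assoc _ _ (runit X)), runit_nat, <- ?comp_assoc,
    (comp_assoc _ _ (1_ X ⊗ eps)), <- tensH_comp_idl.
  reflexivity.
Qed.

Lemma ptrace_braid_inv :
  lunit T ∘ ((eps ⊗ 1_ T) ∘ (assoc_inv T Tv T ∘ ((1_ T ⊗ eta) ∘ runit_inv T))) = 1_ T ->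
  ptrace T (braid_inv T T) = 1_ T.
Proof.
  intro yank. unfold ptrace, ptrace_out, ptrace_in, coev.
  rewrite (tensH_comp_idl eta (braid_inv T Tv)), <- ?comp_assoc,
    (comp_assoc _ (1_ T ⊗ braid_inv T Tv) (assoc_inv T T Tv)),
    (comp_assoc _ _ (braid_inv T T ⊗ 1_ Tv)), hexagon1_inv, <- ?comp_assoc,
    (compK _ _ _ (assoc_inv_r _ _ _)), (comp_assoc _ _ (1_ T ⊗ eps)), <- braid_inv_nat,
    <- ?comp_assoc, (comp_assoc _ _ (runit T)), runit_braid_inv.
  exact yank.
Qed.

Lemma ptrace_out_tens (A Y : Ob C) :
  ptrace_out (tens A Y)
  = (1_ A ⊗ ptrace_out Y) ∘ (assoc A (tens Y T) Tv ∘ (assoc A Y T ⊗ 1_ Tv)).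
Proof.
  rewrite pentagon_inv. unfold ptrace_out.
  rewrite runit_tens, <- (tens_id A Y), <- ?comp_assoc, (comp_assoc _ _ (assoc A Y S)),
    assoc_nat, !tensH_comp_idl, <- ?comp_assoc,
    (compK _ _ _ (tensH_idl_iso _ _ _ (assoc_inv_r _ _ _))).
  reflexivity.
Qed.

Lemma ptrace_in_tens (A Y : Ob C) :
  ptrace_in (tens A Y)
  = (assoc_inv A Y T ⊗ 1_ Tv) ∘ (assoc_inv A (tens Y T) Tv ∘ (1_ A ⊗ ptrace_in Y)).
Proof.
  apply (split_mono_inj (m := assoc A (tens Y T) Tv ∘ (assoc A Y T ⊗ 1_ Tv))
                        (mi := (assoc_inv A Y T ⊗ 1_ Tv) ∘ assoc_inv A (tens Y T) Tv)).
  { rewrite <- ?comp_assoc, (compK _ _ _ (assoc_inv_l _ _ _)).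
    apply tensH_idr_iso, assoc_inv_l. }
  rewrite <- ?comp_assoc, (compK _ _ _ (tensH_idr_iso _ _ _ (assoc_inv_r _ _ _))),
    (compK _ _ _ (assoc_inv_r _ _ _)), !comp_assoc, pentagon_inv.
  unfold ptrace_in.
  rewrite <- ?comp_assoc, (compK _ _ _ (assoc_inv_r _ _ _)), <- (tens_id A Y),
    (comp_assoc _ _ (assoc A Y (tens T Tv))), assoc_nat, <- ?comp_assoc,
    runit_inv_tens, !tensH_comp_idl, <- ?comp_assoc.
  reflexivity.
Qed.

Lemma euler_mul_tens (A Y : Ob C) : euler_mul (tens A Y) = 1_ A ⊗ euler_mul Y.
Proof.
  unfold euler_mul.
  rewrite runit_tens, <- (tens_id A Y), <- ?comp_assoc, (comp_assoc _ _ (assoc A Y S)),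
    assoc_nat, <- ?comp_assoc, runit_inv_tens, !tensH_comp_idl.
  reflexivity.
Qed.

Lemma ptrace_tensH_idl (A Y : Ob C) (k : Hom (tens Y T) (tens Y T)) :
  ptrace (tens A Y) (assoc_inv A Y T ∘ ((1_ A ⊗ k) ∘ assoc A Y T)) = 1_ A ⊗ ptrace Y k.
Proof.
  unfold ptrace.
  rewrite ptrace_out_tens, ptrace_in_tens, !tensH_comp_idr, <- ?comp_assoc,
    (compK _ _ _ (tensH_idr_iso _ _ _ (assoc_inv_r _ _ _))),
    (compK _ _ _ (tensH_idr_iso _ _ _ (assoc_inv_r _ _ _))),
    (comp_assoc _ _ (assoc A (tens Y T) Tv)), assoc_nat, <- ?comp_assoc,
    (compK _ _ _ (assoc_inv_r _ _ _)), !tensH_comp_idl.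
  reflexivity.
Qed.

End PartialTrace.
End MonoidalFacts.

Arguments euler_mul {C T Tv} eta eps X.

Theorem lemma3p11 (C : BraidedMonoidalCategory) (T Tv : Ob C)
    (eta : Hom unitO (tens Tv T)) (eps : Hom (tens T Tv) unitO) :
  symmetric_obj T -> is_dual eta eps ->
  twisted_trivial_braiding T (euler_twist eta eps).
Proof.
  intros Hsym [yank _].
  assert (braid_inv_euler :
    comp (braid_inv T T) (euler_mul eta eps (tens T T)) = idm (tens T T)).
  { rewrite <- ptrace_tensH_id, (symmetric_obj_braid_inv Hsym), ptrace_tensH_idl,
      (ptrace_braid_inv yank), tens_id.
    reflexivity. }
  change (euler_twist eta eps) with (euler_mul eta eps T).
  unfold twisted_trivial_braiding.
  rewrite <- euler_mul_tens, <- (comp_id_r (braid T T)), <- braid_inv_euler, comp_assoc,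
    braid_inv_r, comp_id_l.
  reflexivity.
Qed.
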